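(* Let $n \geq 2$. (1) If $a(n-1) <_4 a(n+1)$ and $a(n) \leq_4 a(n+2)$, then $S(n) = \frac{a(n)a(n+1)}{4}$. (2) If $a(n-1) >_4 a(n+1)$ and $a(n) \geq_4 a(n+2)$, then $S(n) = \frac{a(n)a(n+1)}{4} + \frac12$. (3) If $a(n-1) <_4 a(n+1)$ and $a(n) >_4 a(n+2)$, then $S(n) = \frac{a(n)(a(n+1)-1)}{4}$. (4) If $a(n-1) >_4 a(n+1)$ and $a(n) <_4 a(n+2)$, then $S(n) = \frac{(a(n)+1)a(n+1)}{4}$.
   Context: $(a(n))_{n\geq0}$ is the increasing sequence (indexed from $0$, so $a(0)=1,a(1)=2,a(2)=4,a(3)=7,\ldots$) of odious numbers, i.e. nonnegative integers whose sum of binary digits is odd, and $S(n) = \sum_{k=0}^n a(k)$. For integers $x, y$, let $\bar x, \bar y \in \{0,1,2,3\}$ be their residues modulo $4$; write $x <_4 y$ if $\bar x < \bar y$, $x \leq_4 y$ if $\bar x \leq \bar y$, and $x >_4 y$ (resp. $x \geq_4 y$) if $y <_4 x$ (resp. $y \leq_4 x$). *)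

From mathcomp Require Import all_boot all_order all_algebra.
Set Implicit Arguments. Unset Strict Implicit. Unset Printing Implicit Defensive.

Fixpoint bitsum_aux (fuel n : nat) : nat :=
  match fuel with
  | 0 => 0
  | f.+1 => if n is 0 then 0 else odd n + bitsum_aux f n./2
  end.
Definition bitsum (n : nat) : nat := bitsum_aux n n.

Definition odious (n : nat) : bool := odd (bitsum n).

(* The list [filter odious (iota 0 (4*n+4))] enumerates the odious numbers
   below 4n+4 in increasing order; it contains at least 2n+2 > n elements
   (exactly one of 2m, 2m+1 is odious), so its n-th entry is a(n). *)
Definition a (n : nat) : nat := nth 0 (filter odious (iota 0 (4 * n + 4))) n.

Definition S (n : nat) : nat := \sum_(0 <= k < n.+1) a k.

Definition lt4 (x y : nat) : bool := x %% 4 < y %% 4.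
Definition le4 (x y : nat) : bool := x %% 4 <= y %% 4.

Example a_check : [seq a i | i <- iota 0 8] = [:: 1; 2; 4; 7; 8; 11; 13; 14].
Proof. by []. Qed.

From mathcomp Require Import all_boot all_order all_algebra.
From mathcomp Require Import zify ring lra.
Import GRing.Theory.

(* Since odious (2k) = odious k and odious (2k+1) = ~~ odious k, exactly one of
   2k, 2k+1 is odious, so a k = 2k + [k is not odious].  Hence
   a(2k) + a(2k+1) = 8k + 3, which gives S in closed form; the residues of
   a(n-1), ..., a(n+2) mod 4 are fixed by whether the neighbouring halves
   k are odious, and each case becomes a polynomial identity in k. *)

Lemma bitsum_auxSS f n :
  bitsum_aux f.+1 n.+1 = odd n.+1 + bitsum_aux f n.+1./2.
Proof. by []. Qed.

Lemma bitsum_auxE f n : n <= f -> bitsum_aux f n = bitsum n.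
Proof.
have fuelS g m : m <= g -> bitsum_aux g.+1 m = bitsum_aux g m.
  elim: g m => [|g IHg] [|m] // le_mg.
  by rewrite !bitsum_auxSS IHg // -divn2; lia.
elim: f => [|f IHf] le_n_fS; first by have -> : n = 0 by lia.
have [le_n_f|->] : n <= f \/ n = f.+1 by lia.
  by rewrite fuelS // IHf.
by [].
Qed.

Lemma bitsum_double k : bitsum k.*2 = bitsum k.
Proof.
case: k => [|k] //; rewrite /bitsum doubleS bitsum_auxSS -doubleS.
by rewrite odd_double doubleK bitsum_auxE //; lia.
Qed.

Lemma bitsum_doubleS k : bitsum k.*2.+1 = (bitsum k).+1.
Proof.
rewrite /bitsum bitsum_auxSS /= odd_double uphalf_double.
by rewrite bitsum_auxE //; lia.
Qed.

Lemma odious_double k : odious k.*2 = odious k.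
Proof. by rewrite /odious bitsum_double. Qed.

Lemma odious_doubleS k : odious k.*2.+1 = ~~ odious k.
Proof. by rewrite /odious bitsum_doubleS. Qed.

Lemma filter_odious_iota N :
  filter odious (iota 0 N.*2) = [seq k.*2 + ~~ odious k | k <- iota 0 N].
Proof.
elim: N => [|N IHN] //.
rewrite doubleS -addn2 iotaD filter_cat IHN -[N.+1]addn1 iotaD map_cat /=.
rewrite add0n odious_double odious_doubleS.
by case: (odious N); rewrite /= ?addn0 ?addn1.
Qed.

Lemma aE k : a k = k.*2 + ~~ odious k.
Proof.
rewrite /a (_ : 4 * k + 4 = k.*2.+2.*2); last by lia.
by rewrite filter_odious_iota (nth_map 0) ?size_iota ?nth_iota //; lia.
Qed.

Lemma a_double k : a k.*2 = 4 * k + ~~ odious k.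
Proof. by rewrite aE odious_double; lia. Qed.

Lemma a_doubleS k : a k.*2.+1 = 4 * k + 2 + odious k.
Proof. by rewrite aE odious_doubleS negbK; lia. Qed.

Lemma S_doubleS k : S k.*2.+1 = 4 * k * k + 7 * k + 3.
Proof.
rewrite /S; elim: k => [|k IHk]; first by rewrite !big_nat_recr //= big_geq.
rewrite doubleS big_nat_recr //= big_nat_recr //= IHk -doubleS.
rewrite a_double a_doubleS.
by case: (odious k.+1) => /=; lia.
Qed.

Lemma S_double k : S k.*2 = 4 * k * k + 3 * k + ~~ odious k.
Proof.
have := S_doubleS k; rewrite /S big_nat_recr //= -/(S k.*2) a_doubleS.
by case: (odious k) => /=; lia.
Qed.

(* The four cases multiplied by 4, for x0, ..., x3 = a(n-1), ..., a(n+2);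
   the third is stated additively to avoid truncated subtraction. *)
Definition quarter_formulas (s x0 x1 x2 x3 : nat) : Prop :=
  [/\ lt4 x0 x2 -> le4 x1 x3 -> 4 * s = x1 * x2,
      lt4 x2 x0 -> le4 x3 x1 -> 4 * s = x1 * x2 + 2,
      lt4 x0 x2 -> lt4 x3 x1 -> 4 * s + x1 = x1 * x2
    & lt4 x2 x0 -> lt4 x1 x3 -> 4 * s = x1.+1 * x2].

Lemma quarter_formulas_even k :
  quarter_formulas (S k.+1.*2)
    (a k.*2.+1) (a k.+1.*2) (a k.+1.*2.+1) (a k.+2.*2).
Proof.
rewrite /quarter_formulas /lt4 /le4 S_double !a_double !a_doubleS.
by case: (odious k); case: (odious k.+1); case: (odious k.+2) => /=;
  split=> ? ?; lia.
Qed.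

Lemma quarter_formulas_odd k :
  quarter_formulas (S k.+1.*2.+1)
    (a k.+1.*2) (a k.+1.*2.+1) (a k.+2.*2) (a k.+2.*2.+1).
Proof.
rewrite /quarter_formulas /lt4 /le4 S_doubleS !a_double !a_doubleS.
by case: (odious k.+1); case: (odious k.+2) => /=; split=> ? ?; lia.
Qed.

Local Open Scope ring_scope.

Lemma natr_eq_of_mul4 (s u v : nat) (q : rat) :
  (4 * s + u = v)%N -> 4 * q + u%:R = v%:R -> s%:R = q.
Proof.
by move=> /(congr1 (GRing.natmul (1 : rat))); rewrite natrD natrM; lra.
Qed.

Theorem theorem3 (n : nat) (hn : (2 <= n)%N) :
  (lt4 (a n.-1) (a n.+1) -> le4 (a n) (a n.+2) ->
     (S n)%:R = ((a n)%:R * (a n.+1)%:R / 4 : rat)) /\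
  (lt4 (a n.+1) (a n.-1) -> le4 (a n.+2) (a n) ->
     (S n)%:R = ((a n)%:R * (a n.+1)%:R / 4 + 1 / 2 : rat)) /\
  (lt4 (a n.-1) (a n.+1) -> lt4 (a n.+2) (a n) ->
     (S n)%:R = ((a n)%:R * ((a n.+1)%:R - 1) / 4 : rat)) /\
  (lt4 (a n.+1) (a n.-1) -> lt4 (a n) (a n.+2) ->
     (S n)%:R = (((a n)%:R + 1) * (a n.+1)%:R / 4 : rat)).
Proof.
have [h1 h2 h3 h4] : quarter_formulas (S n) (a n.-1) (a n) (a n.+1) (a n.+2).
  (* The neighbouring indices of k.+1.*2 reduce to k.*2.+1 and k.+2.*2. *)
  have [k [->|->]] : exists k, n = k.+1.*2 \/ n = k.+1.*2.+1.
    by exists n./2.-1; lia.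
  - exact: quarter_formulas_even.
  - exact: quarter_formulas_odd.
split; [|split; [|split]] => p q.
- apply: (natr_eq_of_mul4 (S n) 0 (a n * a n.+1)); first by rewrite addn0 h1.
  by rewrite natrM; field.
- apply: (natr_eq_of_mul4 (S n) 0 (a n * a n.+1 + 2)).
    by rewrite addn0 h2.
  by rewrite natrD natrM; field.
- apply: (natr_eq_of_mul4 (S n) (a n) (a n * a n.+1)); first exact: h3.
  by rewrite natrM; field.
- apply: (natr_eq_of_mul4 (S n) 0 ((a n).+1 * a n.+1)).
    by rewrite addn0 h4.
  by rewrite natrM -addn1 natrD; field.
Qed.
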